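(* Let $A$ be a physical system of dimension $m$ whose Hamiltonian $H^A=\sum_{x=1}^m a_x|x\rangle\langle x|$ has a non-degenerate Bohr spectrum, and let $\mathcal{E}:A\to A$ be a quantum channel. Then $\mathcal{E}$ is time-translation covariant if and only if there exist a conditional probability distribution $\{p_{y|x}\}_{x,y\in[m]}$ (i.e. $p_{y|x}\ge0$ and $\sum_y p_{y|x}=1$ for every $x$) and an $m\times m$ positive semidefinite matrix $Q=(q_{xy})$ with diagonal entries $q_{xx}=p_{x|x}$ for all $x\in[m]$, such that the Choi matrix of $\mathcal{E}$ is $$J_\mathcal{E}^{A\tilde A}=\sum_{x,y\in[m]}p_{y|x}|x\rangle\langle x|^A\otimes|y\rangle\langle y|^{\tilde A}+\sum_{x\neq y,\ x,y\in[m]}q_{xy}|x\rangle\langle y|^A\otimes|x\rangle\langle y|^{\tilde A}.$$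
   Context: $H^A$ has a non-degenerate Bohr spectrum if for all $x,y,x',y'\in[m]$: $a_x-a_y=a_{x'}-a_{y'}$ holds iff ($x=x'$ and $y=y'$) or ($x=y$ and $x'=y'$). A channel $\mathcal{E}:A\to A$ is time-translation covariant if $\mathcal{E}(e^{-iH^At}\rho e^{iH^At})=e^{-iH^At}\mathcal{E}(\rho)e^{iH^At}$ for all $t\in\mathbb{R}$ and all states $\rho$. The Choi matrix of $\mathcal{E}$ is $J_\mathcal{E}^{A\tilde A}=\sum_{x,x'\in[m]}|x\rangle\langle x'|^A\otimes\mathcal{E}(|x\rangle\langle x'|)^{\tilde A}$, where $\tilde A$ is a copy of $A$. *)

From HB Require Import structures.
From mathcomp Require Import all_boot all_order all_algebra.
From mathcomp Require Import complex mxtens.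
From mathcomp Require Import reals trigo.
Set Implicit Arguments. Unset Strict Implicit. Unset Printing Implicit Defensive.
Import Order.TTheory GRing.Theory Num.Theory.
Local Open Scope ring_scope.

Section QDefs.
Variable R : realType.
Local Notation C := R[i].

Definition adjmx (p q : nat) (A : 'M[C]_(p, q)) : 'M[C]_(q, p) :=
  (map_mx Num.conj A)^T.

Definition psd (n : nat) (A : 'M[C]_n) : Prop :=
  A = adjmx A /\ forall v : 'cV[C]_n, 0 <= (adjmx v *m A *m v) 0 0.

Definition is_state (n : nat) (rho : 'M[C]_n) : Prop :=
  psd rho /\ \tr rho = 1.

(* (id_k (x) E) applied to X : 'M_(k * n), where index mxtens_index (a, x)
   stands for |a> (x) |x> *)
Definition ampl (k n : nat) (E : 'M[C]_n -> 'M[C]_n) (X : 'M[C]_(k * n))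
  : 'M[C]_(k * n) :=
  \matrix_(i, j)
    E (\matrix_(x, y) X (mxtens_index ((mxtens_unindex i).1, x))
                        (mxtens_index ((mxtens_unindex j).1, y)))
      (mxtens_unindex i).2 (mxtens_unindex j).2.

Definition completely_positive (n : nat) (E : 'M[C]_n -> 'M[C]_n) : Prop :=
  forall (k : nat) (X : 'M[C]_(k * n)), psd X -> psd (ampl E X).

Definition trace_preserving (n : nat) (E : 'M[C]_n -> 'M[C]_n) : Prop :=
  forall X : 'M[C]_n, \tr (E X) = \tr X.

Definition quantum_channel (n : nat) (E : {linear 'M[C]_n -> 'M[C]_n}) : Prop :=
  completely_positive E /\ trace_preserving E.

Definition expi (theta : R) : C := Complex (cos theta) (sin theta).

Definition evol (n : nat) (a : 'I_n -> R) (t : R) : 'M[C]_n :=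
  diag_mx (\row_x expi (- (a x * t))).

Definition nondegenerate_bohr (n : nat) (a : 'I_n -> R) : Prop :=
  forall x y x' y' : 'I_n,
    a x - a y = a x' - a y' <-> (x = x' /\ y = y') \/ (x = y /\ x' = y').

Definition time_covariant (n : nat) (a : 'I_n -> R)
  (E : 'M[C]_n -> 'M[C]_n) : Prop :=
  forall (t : R) (rho : 'M[C]_n), is_state rho ->
    E (evol a t *m rho *m adjmx (evol a t))
    = evol a t *m E rho *m adjmx (evol a t).

Definition choi (n : nat) (E : 'M[C]_n -> 'M[C]_n) : 'M[C]_(n * n) :=
  \sum_(x < n) \sum_(x' < n) (delta_mx x x' *t E (delta_mx x x')).

End QDefs.

(* Conjugation by e^{-iHt} multiplies the matrix unit |x><y| by e^{i(a_y - a_x)t}.  Density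
   matrices span all matrices and X |-> E(e^{-iHt} X e^{iHt}) - e^{-iHt} E(X) e^{iHt} is linear,
   so E is covariant iff each entry E(|x><y|)_{uv} vanishes unless a_x - a_y = a_u - a_v, which
   by non-degeneracy of the Bohr spectrum means (x, y) = (u, v) or (x = y and u = v).  These are
   exactly the Choi entries J_{(x,u),(y,v)} = E(|x><y|)_{uv} allowed by the displayed form, with
   p_{y|x} = E(|x><x|)_{yy} and q_{xy} = E(|x><y|)_{xy}.  Complete positivity makes J positive
   semidefinite, hence p >= 0 and Q, a principal submatrix of J, is positive semidefinite; trace
   preservation gives sum_y p_{y|x} = 1. *)

From HB Require Import structures.
From mathcomp Require Import all_boot all_order all_algebra.
From mathcomp Require Import complex mxtens.
From mathcomp Require Import reals trigo.
From mathcomp Require Import ring lra.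
Import Order.TTheory GRing.Theory Num.Theory.
Local Open Scope ring_scope.

Section Covariance.
Set Implicit Arguments. Unset Strict Implicit. Unset Printing Implicit Defensive.
Variable R : realType.
Local Notation C := R[i].

Lemma expiD (s r : R) : expi s * expi r = expi (s + r).
Proof. by rewrite /expi cosD sinD /=; congr Complex; ring. Qed.

Lemma expi0 : expi 0 = 1 :> C.
Proof. by rewrite /expi cos0 sin0. Qed.

Lemma conj_expi (s : R) : (expi s)^* = expi (- s).
Proof. by rewrite /expi cosN sinN. Qed.

Lemma expi_scale_inj (c d : R) : (forall t, expi (c * t) = expi (d * t)) -> c = d.
Proof.
move=> eq_cd; apply/eqP/negPn/negP; rewrite -subr_eq0 => cd_neq0.
have /(congr1 (fun z => z * expi (- (d * (pi / (c - d)))))) := eq_cd (pi / (c - d)).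
rewrite !expiD subrr expi0 -mulNr -mulrDl mulrCA mulfV // mulr1.
by rewrite /expi cospi sinpi => -[]; lra.
Qed.

Lemma adjmxE p q (A : 'M[C]_(p, q)) i j : adjmx A i j = (A j i)^*.
Proof. by rewrite !mxE. Qed.

Lemma adjmxK p q (A : 'M[C]_(p, q)) : adjmx (adjmx A) = A.
Proof. by apply/matrixP => i j; rewrite !adjmxE conjCK. Qed.

Lemma adjmxM p q r (A : 'M[C]_(p, q)) (B : 'M[C]_(q, r)) :
  adjmx (A *m B) = adjmx B *m adjmx A.
Proof. by rewrite /adjmx map_mxM trmx_mul. Qed.

Lemma adjmxZ p q c (A : 'M[C]_(p, q)) : adjmx (c *: A) = c^* *: adjmx A.
Proof. by apply/matrixP => i j; rewrite !mxE rmorphM. Qed.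

Lemma adjmx_delta p q (i : 'I_p) (j : 'I_q) :
  adjmx (delta_mx i j : 'M[C]_(p, q)) = delta_mx j i.
Proof. by apply/matrixP => u v; rewrite !mxE conjC_nat andbC. Qed.

Lemma psd_outer n (c : C) (v : 'cV[C]_n) : 0 <= c -> psd (c *: (v *m adjmx v)).
Proof.
move=> c_ge0; have cJ : c^* = c by apply/conj_Creal/ger0_real.
split=> [|u]; first by rewrite adjmxZ adjmxM adjmxK cJ.
rewrite -scalemxAr -scalemxAl mxE !mulmxA -(mulmxA (adjmx u *m v)).
have -> : adjmx v *m u = adjmx (adjmx u *m v) by rewrite adjmxM adjmxK.
rewrite [(_ *m _) 0 0]mxE big_ord1 adjmxE -normCK.
by rewrite mulr_ge0 ?exprn_ge0.
Qed.

Lemma psd_congr p q (J : 'M[C]_p) (P : 'M[C]_(p, q)) :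
  psd J -> psd (adjmx P *m J *m P).
Proof.
move=> [J_herm J_ge0]; split=> [|v]; first by rewrite !adjmxM adjmxK -J_herm mulmxA.
by have := J_ge0 (P *m v); rewrite adjmxM !mulmxA.
Qed.

Lemma psd_mxsub p q (f : 'I_q -> 'I_p) (J : 'M[C]_p) : psd J -> psd (mxsub f f J).
Proof.
pose P : 'M[C]_(p, q) := colsub f 1%:M.
have -> : mxsub f f J = adjmx P *m J *m P.
  have -> : adjmx P = rowsub f 1%:M.
    by apply/matrixP => i j; rewrite !mxE conjC_nat eq_sym.
  by rewrite mul_rowsub_mx mul1mx -mxsub_mul mulmx1.
exact: psd_congr.
Qed.

Lemma psd_diag_ge0 p (J : 'M[C]_p) k : psd J -> 0 <= J k k.
Proof.
move=> [_ /(_ (delta_mx k 0))]; rewrite adjmx_delta -rowE mxE (bigD1 k) //=.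
rewrite big1 ?addr0 => [|i /negPf neq_ik]; first by rewrite !mxE eqxx mulr1.
by rewrite !mxE neq_ik mulr0.
Qed.

Lemma linear_eq0_delta n (V : lmodType C) (f : {linear 'M[C]_n -> V}) :
  (forall i j, f (delta_mx i j) = 0) -> forall X, f X = 0.
Proof.
move=> f_delta X; rewrite [X]matrix_sum_delta linear_sum big1 // => i _.
by rewrite linear_sum big1 // => j _; rewrite linearZ /= f_delta scaler0.
Qed.

Lemma mxtrace_delta n (x y : 'I_n) : \tr (delta_mx x y : 'M[C]_n) = (x == y)%:R.
Proof.
rewrite /mxtrace (bigD1 x) //= big1 ?addr0 => [|i /negPf neq_ix]; first by rewrite mxE eqxx.
by rewrite mxE neq_ix.
Qed.

Lemma is_state_delta n (x : 'I_n) : is_state (delta_mx x x : 'M[C]_n).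
Proof.
split; last by rewrite mxtrace_delta eqxx.
rewrite -[delta_mx x x]scale1r -[delta_mx x x](mul_delta_mx (0 : 'I_1)) -(adjmx_delta x 0).
exact/psd_outer/ler01.
Qed.

Lemma outer_delta_add n (x y : 'I_n) (c : C) :
  let w := (delta_mx x 0 : 'cV[C]_n) + c *: delta_mx y 0 in
  w *m adjmx w = delta_mx x x + c^* *: delta_mx x y + c *: delta_mx y x
                 + (c * c^*) *: delta_mx y y.
Proof.
apply/matrixP => i j; rewrite !mxE big_ord1 !mxE /= !rmorphD !rmorphM /= !conjC_nat.
by case: (i == x); case: (i == y); case: (j == x); case: (j == y) => /=; ring.
Qed.

Lemma is_state_half_outer n (x y : 'I_n) (c : C) : x != y -> c * c^* = 1 ->
  let w := (delta_mx x 0 : 'cV[C]_n) + c *: delta_mx y 0 in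
  is_state (2^-1 *: (w *m adjmx w)).
Proof.
move=> neq_xy c_unit w; split; first by apply: psd_outer; rewrite invr_ge0 ler0n.
rewrite mxtraceZ outer_delta_add !mxtraceD !mxtraceZ !mxtrace_delta !eqxx.
by rewrite (negPf neq_xy) eq_sym (negPf neq_xy) c_unit !mulr0 !addr0 mulr1 mulVf ?pnatr_eq0.
Qed.

Lemma linear_eq0_states n (V : lmodType C) (f : {linear 'M[C]_n -> V}) :
  (forall rho, is_state rho -> f rho = 0) -> forall X, f X = 0.
Proof.
move=> f_states; apply: linear_eq0_delta => x y.
have f_diag z : f (delta_mx z z) = 0 by apply/f_states/is_state_delta.
have [<-|neq_xy] := eqVneq x y; first exact: f_diag.
(* The states built from e_x + e_y and e_x + i e_y separate f(e_xy) from f(e_yx). *)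
have f_off c : c * c^* = 1 -> c^* *: f (delta_mx x y) + c *: f (delta_mx y x) = 0.
  move=> c_unit; have /eqP := f_states _ (is_state_half_outer neq_xy c_unit).
  rewrite linearZ outer_delta_add !linearD !linearZ /= !f_diag !scaler0 add0r addr0.
  by rewrite scaler_eq0 invr_eq0 pnatr_eq0 => /eqP.
have one_unit : 1 * 1^* = 1 :> C by rewrite conjC1 mulr1.
have i_unit : 'i * 'i^* = 1 :> C by rewrite conjCi mulrN -expr2 sqrCi opprK.
have /eqP := f_off 1 one_unit.
rewrite conjC1 !scale1r addrC addr_eq0 => /eqP f_yx.
have /eqP := f_off 'i i_unit.
rewrite f_yx conjCi scalerN scaleNr -opprD oppr_eq0 -scalerDl scaler_eq0.
by rewrite -mulr2n mulrn_eq0 /= (negPf (neq0Ci C)) => /eqP.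
Qed.

Lemma evol_conjE m (a : 'I_m -> R) t (M : 'M[C]_m) u v :
  (evol a t *m M *m adjmx (evol a t)) u v = expi ((a v - a u) * t) * M u v.
Proof.
rewrite /evol /adjmx mul_diag_mx !mxE (bigD1 v) //= big1 ?addr0 => [|j neq_jv].
  by rewrite !mxE eqxx mulr1n conj_expi opprK mulrAC expiD mulrBl addrC.
by rewrite !mxE eq_sym (negPf neq_jv) mulr0n conjC0 mulr0.
Qed.

Lemma evol_conj_delta m (a : 'I_m -> R) t (x y : 'I_m) :
  evol a t *m delta_mx x y *m adjmx (evol a t) = expi ((a y - a x) * t) *: delta_mx x y.
Proof.
apply/matrixP => u v; rewrite evol_conjE !mxE.
by case: (u =P x) => [->|_]; case: (v =P y) => [->|_]; rewrite ?mulr0.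
Qed.

Definition covariance_defect m (a : 'I_m -> R) (E : 'M[C]_m -> 'M[C]_m) t (X : 'M[C]_m) :=
  E (evol a t *m X *m adjmx (evol a t)) - evol a t *m E X *m adjmx (evol a t).

Lemma covariance_defectP m (a : 'I_m -> R) (E : {linear 'M[C]_m -> 'M[C]_m}) t (c : C)
    (X Y : 'M[C]_m) :
  covariance_defect a E t (c *: X + Y)
  = c *: covariance_defect a E t X + covariance_defect a E t Y.
Proof.
rewrite /covariance_defect mulmxDr mulmxDl -scalemxAr -scalemxAl !linearP /=.
by rewrite mulmxDl -scalemxAl scalerBr addrACA opprD.
Qed.

Definition delta_covariant m (a : 'I_m -> R) (E : 'M[C]_m -> 'M[C]_m) :=
  forall t x y, E (evol a t *m delta_mx x y *m adjmx (evol a t))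
                = evol a t *m E (delta_mx x y) *m adjmx (evol a t).

Lemma time_covariant_deltaP m (a : 'I_m -> R) (E : {linear 'M[C]_m -> 'M[C]_m}) :
  time_covariant a E <-> delta_covariant a E.
Proof.
have defect_eq0 t X : covariance_defect a E t X = 0 <->
    E (evol a t *m X *m adjmx (evol a t)) = evol a t *m E X *m adjmx (evol a t).
  by split=> [/subr0_eq | eq_EX]; last by rewrite /covariance_defect eq_EX subrr.
pose D t : {linear 'M[C]_m -> 'M[C]_m} :=
  HB.pack (covariance_defect a E t)
    (GRing.isLinear.Build _ _ _ _ _ (covariance_defectP a E t)).
split=> [cov t x y | cov_delta t rho _]; apply/defect_eq0.
  by apply: (linear_eq0_states (f := D t)) => rho rho_state; apply/defect_eq0/cov.
by apply: (linear_eq0_delta (f := D t)) => x y; apply/defect_eq0/cov_delta.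
Qed.

Definition bohr_supported m (E : 'M[C]_m -> 'M[C]_m) :=
  forall x y u v, E (delta_mx x y) u v != 0 -> (x = u /\ y = v) \/ (x = y /\ u = v).

Lemma delta_covariant_bohr_supportedP m (a : 'I_m -> R)
    (E : {linear 'M[C]_m -> 'M[C]_m}) :
  nondegenerate_bohr a -> delta_covariant a E <-> bohr_supported E.
Proof.
move=> bohr; split=> [cov x y u v nz | supp t x y].
  have bohr_eq : a y - a x = a v - a u.
    apply: expi_scale_inj => t; apply: (mulIf nz).
    have := congr1 (fun M : 'M[C]_m => M u v) (cov t x y).
    by rewrite evol_conj_delta linearZ evol_conjE mxE.
  by apply/bohr; lra.
apply/matrixP => u v; rewrite evol_conj_delta linearZ evol_conjE mxE /=.
have [->|nz] := eqVneq (E (delta_mx x y) u v) 0; first by rewrite !mulr0.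
by case: (supp _ _ _ _ nz) => -[<- <-]; rewrite ?subrr.
Qed.

Lemma choiE m (E : 'M[C]_m -> 'M[C]_m) a u b v :
  choi E (mxtens_index (a, u)) (mxtens_index (b, v)) = E (delta_mx a b) u v.
Proof.
rewrite /choi summxE (big_only1 a) // => [|x neq_xa _].
  rewrite summxE (big_only1 b) // => [|x' neq_x'b _]; first by rewrite tensmxE mxE !eqxx mul1r.
  by rewrite tensmxE mxE (eq_sym b) (negPf neq_x'b) andbF mul0r.
by rewrite summxE big1 // => x' _; rewrite tensmxE mxE (eq_sym a) (negPf neq_xa) mul0r.
Qed.

Definition max_entangled m : 'cV[C]_(m * m) :=
  \col_i (((mxtens_unindex i).1 == (mxtens_unindex i).2)%:R).

Lemma choi_ampl m (E : 'M[C]_m -> 'M[C]_m) :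
  choi E = ampl E (max_entangled m *m adjmx (max_entangled m)).
Proof.
apply/matrixP => i j; rewrite -(mxtens_unindexK i) -(mxtens_unindexK j).
case: (mxtens_unindex i) (mxtens_unindex j) => [a u] [b v].
rewrite choiE mxE !mxtens_indexK /=; congr (E _ u v); apply/matrixP => x y.
rewrite !mxE big_ord1 !mxE !mxtens_indexK /= conjC_nat (eq_sym a) (eq_sym b).
by case: (x == a); case: (y == b); rewrite ?mulr1 ?mulr0 ?mul0r.
Qed.

Lemma choi_psd m (E : 'M[C]_m -> 'M[C]_m) : completely_positive E -> psd (choi E).
Proof.
move=> E_cp; rewrite choi_ampl -[_ *m _]scale1r.
exact/E_cp/psd_outer/ler01.
Qed.

Definition covariant_choi m (p : 'I_m -> 'I_m -> R) (Q : 'M[C]_m) : 'M[C]_(m * m) :=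
  \sum_(x < m) \sum_(y < m) (p x y)%:C%C *: (delta_mx x x *t delta_mx y y)
  + \sum_(x < m) \sum_(y < m | y != x) Q x y *: (delta_mx x y *t delta_mx x y).

Lemma tens_deltaE m (x y x' y' a u b v : 'I_m) :
  (delta_mx x y *t delta_mx x' y' : 'M[C]_(m * m)) (mxtens_index (a, u)) (mxtens_index (b, v))
  = [&& a == x, b == y, u == x' & v == y']%:R.
Proof. by rewrite tensmxE !mxE; do 4!case: eqP => _; rewrite ?mulr1 ?mulr0. Qed.

Lemma covariant_choiE m (p : 'I_m -> 'I_m -> R) (Q : 'M[C]_m) a u b v :
  covariant_choi p Q (mxtens_index (a, u)) (mxtens_index (b, v)) =
  ((a == b) && (u == v))%:R * (p a u)%:C%C
  + [&& a != b, a == u & b == v]%:R * Q a b.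
Proof.
rewrite /covariant_choi mxE !summxE; congr (_ + _).
  rewrite (big_only1 a) // => [|x neq_xa _]; last first.
    by rewrite summxE big1 // => y _; rewrite mxE tens_deltaE (eq_sym a) (negPf neq_xa) mulr0.
  rewrite summxE (big_only1 u) // => [|y neq_yu _]; last first.
    by rewrite mxE tens_deltaE (eq_sym u) (negPf neq_yu) !andbF mulr0.
  rewrite mxE tens_deltaE !eqxx (eq_sym b) (eq_sym v) mulrC.
  by case: (a == b); case: (u == v).
rewrite (big_only1 a) // => [|x neq_xa _]; last first.
  by rewrite summxE big1 // => y _; rewrite mxE tens_deltaE (eq_sym a) (negPf neq_xa) mulr0.
rewrite summxE; have [<-|neq_ab] := eqVneq a b.
  by rewrite big1 ?mul0r // => y neq_ya; rewrite mxE tens_deltaE eq_sym (negPf neq_ya) andbF mulr0.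
rewrite (big_only1 b) ?(eq_sym b) // => [|y neq_yb _]; last first.
  by rewrite mxE tens_deltaE (eq_sym b) (negPf neq_yb) andbF mulr0.
rewrite mxE tens_deltaE !eqxx (eq_sym u) (eq_sym v) mulrC.
by case: (a == u); case: (b == v).
Qed.

Lemma covariant_choi_bohr_supported m (E : 'M[C]_m -> 'M[C]_m) p (Q : 'M[C]_m) :
  choi E = covariant_choi p Q -> bohr_supported E.
Proof.
move=> choi_eq x y u v; rewrite -choiE choi_eq covariant_choiE.
have [<-|_] := eqVneq x y.
  by case: (u =P v) => [<-|_]; [right | rewrite /= !mul0r addr0 eqxx].
rewrite mul0r add0r /=.
by case: (x =P u) => [<-|_]; case: (y =P v) => [<-|_]; rewrite ?andbF ?mul0r ?eqxx //; left.
Qed.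

Lemma bohr_supported_choi m (E : 'M[C]_m -> 'M[C]_m) (p : 'I_m -> 'I_m -> R) :
  bohr_supported E -> (forall x y, E (delta_mx x x) y y = (p x y)%:C%C) ->
  choi E = covariant_choi p (\matrix_(x, y) E (delta_mx x y) x y).
Proof.
move=> E_supp E_diag; apply/matrixP => i j.
rewrite -(mxtens_unindexK i) -(mxtens_unindexK j).
case: (mxtens_unindex i) (mxtens_unindex j) => [x u] [y v].
rewrite choiE covariant_choiE mxE.
have E0 x' y' u' v' : ~ ((x' = u' /\ y' = v') \/ (x' = y' /\ u' = v')) ->
    E (delta_mx x' y') u' v' = 0.
  move=> not_supp; have [//|nz] := eqVneq (E (delta_mx x' y') u' v') 0.
  by case: not_supp; apply: E_supp.
case: (x =P y) => [<-|neq_xy].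
  case: (u =P v) => [<-|neq_uv]; first by rewrite /= E_diag mul1r mul0r addr0.
  by rewrite /= !mul0r addr0 E0 //; intuition congruence.
rewrite mul0r add0r /=.
case: (x =P u) => [<-|neq_xu]; case: (y =P v) => [<-|neq_yv]; rewrite /= ?mul1r ?mul0r //.
all: by rewrite E0 //; intuition congruence.
Qed.

Lemma ger0_complexE (z : C) : 0 <= z -> z = (complex.Re z)%:C%C.
Proof. by case: z => x y /ger0_Im /= ->. Qed.

Lemma channel_bohr_supportedP m (E : {linear 'M[C]_m -> 'M[C]_m}) :
  quantum_channel E ->
  bohr_supported E <->
  exists (p : 'I_m -> 'I_m -> R) (Q : 'M[C]_m),
    [/\ forall x y, 0 <= p x y, forall x, \sum_(y < m) p x y = 1, psd Q,
        forall x, Q x x = (p x x)%:C%C & choi E = covariant_choi p Q].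
Proof.
move=> [E_cp E_tp]; split=> [E_supp | [p [Q [_ _ _ _]]]]; last exact: covariant_choi_bohr_supported.
have E_diag_ge0 x y : 0 <= E (delta_mx x x) y y.
  by rewrite -choiE; apply/psd_diag_ge0/choi_psd.
pose p x y := complex.Re (E (delta_mx x x) y y).
have E_diag x y : E (delta_mx x x) y y = (p x y)%:C%C by apply/ger0_complexE.
exists p, (\matrix_(x, y) E (delta_mx x y) x y); split.
- by move=> x y; rewrite -ler0c -E_diag.
- move=> x; apply: complexI; rewrite rmorph_sum /=.
  under eq_bigr do rewrite -E_diag.
  by rewrite -/(\tr (E (delta_mx x x))) E_tp mxtrace_delta eqxx.
- have -> : \matrix_(x, y) E (delta_mx x y) x y
           = mxsub (fun x => mxtens_index (x, x)) (fun x => mxtens_index (x, x)) (choi E).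
    by apply/matrixP => x y; rewrite !mxE choiE.
  exact/psd_mxsub/choi_psd.
- by move=> x; rewrite mxE E_diag.
- exact: bohr_supported_choi.
Qed.

End Covariance.

Theorem lemma4 (R : realType) (m : nat) (a : 'I_m -> R)
  (E : {linear 'M[R[i]]_m -> 'M[R[i]]_m}) :
  nondegenerate_bohr a ->
  quantum_channel E ->
  (time_covariant a E <->
   exists (p : 'I_m -> 'I_m -> R) (Q : 'M[R[i]]_m),
     [/\ (forall x y, 0 <= p x y),
         (forall x, \sum_(y < m) p x y = 1),
         psd Q,
         (forall x, Q x x = (p x x)%:C)%C &
         choi E =
           \sum_(x < m) \sum_(y < m)
              (p x y)%:C%C *: (delta_mx x x *t delta_mx y y)
           + \sum_(x < m) \sum_(y < m | y != x)
              Q x y *: (delta_mx x y *t delta_mx x y)]).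
Proof.
move=> bohr E_channel.
apply: iff_trans (time_covariant_deltaP a E) _.
apply: iff_trans (delta_covariant_bohr_supportedP E bohr) _.
exact: channel_bohr_supportedP.
Qed.
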